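(* Let $A>0$, $\sigma>0$ and integer $K\ge2$. Then $$\mathsf{F}(A,K,\sigma)\ \ge\ R_{\rm OWB}(A,K,\sigma):=\log K-\tfrac12\log\Bigl(\tfrac{2\pi e}{12}\Bigr)-\tfrac12\log\Bigl(1+\tfrac{12(K-1)^2\sigma^2}{A^2}\Bigr).$$
   Context: All logarithms are base 2. $\mathsf{F}(A,K,\sigma)=\max\{\mathsf{F}_1,\mathsf{F}_2,\mathsf{F}_3\}(A,K,\sigma)$ with $\mathsf{F}_1(A,K,\sigma)=\log K-H(\xi_{A,K})-\xi_{A,K}\log(K-1)$, $\xi_{A,K}=\frac{2(K-1)}{K}\mathsf{Q}(\frac{A}{2(K-1)\sigma})$; $\mathsf{F}_2(A,K,\sigma)=\underline{C}(\frac{KA}{K-1},\sigma)-\mathsf{E}(\frac{A}{K-1},\sigma)$; $\mathsf{F}_3(A,K,\sigma)=-\log\bigl(\sum_{i,j=1}^K\frac{\sqrt{e/2}}{K^2}e^{-\frac{(i-j)^2A^2}{4(K-1)^2\sigma^2}}\bigr)$. Here $H(p)$ is the binary entropy function, $\mathsf{Q}$ the standard Gaussian tail function, and for $a>0$: $\underline{C}(a,\sigma)=\frac12\log(1+\frac{a^2}{2\pi e\sigma^2})$, $\overline{C}(a,\sigma)=\min\{\frac12\log(1+\frac{a^2}{4\sigma^2}),\log(1+\frac{a}{\sqrt{2\pi e}\sigma})\}$, $\mathsf{E}(a,\sigma)=\min\{\overline{C}(a,\sigma),\frac12\log(1+\frac{a^2}{12\sigma^2})\}$. *)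

From Stdlib Require Import Reals.
From Coquelicot Require Import Coquelicot.
Open Scope R_scope.

Definition log2 (x : R) : R := ln x / ln 2.

(* binary entropy function (bits); 0 log 0 = 0 since Stdlib's ln 0 = 0 *)
Definition Hb (p : R) : R := - p * log2 p - (1 - p) * log2 (1 - p).

Definition gauss_pdf (t : R) : R := exp (- t ^ 2 / 2) / sqrt (2 * PI).
Definition Qfun (x : R) : R :=
  RInt_gen gauss_pdf (at_point x) (Rbar_locally p_infty).

Definition C_low (a s : R) : R := / 2 * log2 (1 + a ^ 2 / (2 * PI * exp 1 * s ^ 2)).
Definition C_up (a s : R) : R :=
  Rmin (/ 2 * log2 (1 + a ^ 2 / (4 * s ^ 2)))
       (log2 (1 + a / (sqrt (2 * PI * exp 1) * s))).
Definition Efun (a s : R) : R :=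
  Rmin (C_up a s) (/ 2 * log2 (1 + a ^ 2 / (12 * s ^ 2))).

Definition xi (A : R) (K : nat) (s : R) : R :=
  2 * (INR K - 1) / INR K * Qfun (A / (2 * (INR K - 1) * s)).

Definition F1 (A : R) (K : nat) (s : R) : R :=
  log2 (INR K) - Hb (xi A K s) - xi A K s * log2 (INR K - 1).

Definition F2 (A : R) (K : nat) (s : R) : R :=
  C_low (INR K * A / (INR K - 1)) s - Efun (A / (INR K - 1)) s.

(* sum over i, j = 1..K *)
Definition F3 (A : R) (K : nat) (s : R) : R :=
  - log2 (sum_f_R0 (fun i => sum_f_R0 (fun j =>
        sqrt (exp 1 / 2) / INR K ^ 2 *
        exp (- ((INR (i + 1) - INR (j + 1)) ^ 2 * A ^ 2)
               / (4 * (INR K - 1) ^ 2 * s ^ 2))) (K - 1)) (K - 1)).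

Definition Fbound (A : R) (K : nat) (s : R) : R :=
  Rmax (F1 A K s) (Rmax (F2 A K s) (F3 A K s)).

Definition R_OWB (A : R) (K : nat) (s : R) : R :=
  log2 (INR K) - / 2 * log2 (2 * PI * exp 1 / 12)
  - / 2 * log2 (1 + 12 * (INR K - 1) ^ 2 * s ^ 2 / A ^ 2).

From Stdlib Require Import Reals Lra.
From Coquelicot Require Import Coquelicot.
Open Scope R_scope.

(* Of the three lower bounds whose maximum is F, the second one,
   F2 = C_low(K A/(K-1)) - E(A/(K-1)), already dominates R_OWB.  Write a = A/(K-1), so that K A/(K-1) = K a.  Since E is a
   minimum, E(a) <= 1/2 log(1 + a^2/(12 s^2)), the capacity of a uniform input.
   It then remains to compare logarithms: with x = a^2/s^2 and c = 2 pi e,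
   the claim becomes log of the elementary inequality
        K^2 (1 + x/12) <= (1 + K^2 x / c) (c/12) (1 + 12/x),
   which holds because the right-hand side expands to the left-hand side plus
   the positive terms c/12 + c/x. *)

Lemma ln2_pos : 0 < ln 2.
Proof. rewrite <- ln_1. apply ln_increasing; lra. Qed.

Lemma log2_le (x y : R) : 0 < x -> x <= y -> log2 x <= log2 y.
Proof.
  intros Hx Hxy. unfold log2.
  apply Rmult_le_compat_r; [left; apply Rinv_0_lt_compat, ln2_pos |].
  destruct Hxy as [Hlt | ->]; [left; apply ln_increasing |]; lra.
Qed.

Lemma log2_mult (x y : R) : 0 < x -> 0 < y -> log2 (x * y) = log2 x + log2 y.
Proof.
  intros Hx Hy. unfold log2. rewrite ln_mult by assumption.
  field. apply Rgt_not_eq, ln2_pos.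
Qed.

(* The elementary inequality behind the bound: the right-hand side equals the
   left-hand side plus c/12 + c/x. *)
Lemma owb_product_bound (k x c : R) :
  0 < x -> 0 < c ->
  k * k * (1 + x / 12) <= (1 + k * k * x / c) * (c / 12) * (1 + 12 / x).
Proof.
  intros Hx Hc.
  assert (Hexpand : (1 + k * k * x / c) * (c / 12) * (1 + 12 / x)
                    = k * k * (1 + x / 12) + c / 12 + c / x)
    by (field; split; lra).
  rewrite Hexpand.
  assert (0 < c / x) by (apply Rdiv_lt_0_compat; lra).
  assert (0 < c / 12) by (apply Rdiv_lt_0_compat; lra).
  lra.
Qed.

Lemma Efun_le_uniform (a s : R) :
  Efun a s <= / 2 * log2 (1 + a ^ 2 / (12 * s ^ 2)).
Proof. apply Rmin_r. Qed.

Lemma capacity_gap_lower_bound (k a s : R) :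
  0 < k -> 0 < a -> 0 < s ->
  C_low (k * a) s - / 2 * log2 (1 + a ^ 2 / (12 * s ^ 2))
  >= log2 k - / 2 * log2 (2 * PI * exp 1 / 12)
     - / 2 * log2 (1 + 12 * s ^ 2 / a ^ 2).
Proof.
  intros Hk Ha Hs. unfold C_low.
  set (c := 2 * PI * exp 1).
  assert (Hc : 0 < c)
    by (unfold c; pose proof PI_RGT_0; pose proof (exp_pos 1); nra).
  set (x := a ^ 2 / s ^ 2).
  assert (Hx : 0 < x) by (unfold x; apply Rdiv_lt_0_compat; apply pow_lt; lra).
  replace ((k * a) ^ 2 / (c * s ^ 2)) with (k * k * x / c)
    by (unfold x; field; split; lra).
  replace (a ^ 2 / (12 * s ^ 2)) with (x / 12) by (unfold x; field; lra).
  replace (12 * s ^ 2 / a ^ 2) with (12 / x) by (unfold x; field; lra).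
  assert (Pk2 : 0 < k * k) by nra.
  assert (P1 : 0 < 1 + k * k * x / c)
    by (assert (0 < k * k * x / c)
       by (apply Rdiv_lt_0_compat; [apply Rmult_lt_0_compat |]; lra); lra).
  assert (P2 : 0 < 1 + 12 / x)
    by (assert (0 < 12 / x) by (apply Rdiv_lt_0_compat; lra); lra).
  assert (P3 : 0 < 1 + x / 12)
    by (assert (0 < x / 12) by (apply Rdiv_lt_0_compat; lra); lra).
  assert (P4 : 0 < c / 12) by (apply Rdiv_lt_0_compat; lra).
  pose proof (log2_le _ _ (Rmult_lt_0_compat _ _ Pk2 P3)
                (owb_product_bound k x c Hx Hc)) as Hlog.
  rewrite (log2_mult _ _ (Rmult_lt_0_compat _ _ P1 P4) P2),
    (log2_mult _ _ P1 P4), (log2_mult _ _ Pk2 P3), (log2_mult _ _ Hk Hk)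
    in Hlog.
  lra.
Qed.

Lemma F2_ge_R_OWB (A s : R) (K : nat) :
  0 < A -> 0 < s -> (2 <= K)%nat -> F2 A K s >= R_OWB A K s.
Proof.
  intros HA Hs HK.
  assert (HK2 : 2 <= INR K) by (apply (le_INR 2) in HK; simpl in HK; lra).
  unfold F2, R_OWB.
  set (k := INR K) in *.
  assert (Ha : 0 < A / (k - 1)) by (apply Rdiv_lt_0_compat; lra).
  pose proof (capacity_gap_lower_bound k (A / (k - 1)) s ltac:(lra) Ha Hs)
    as Hgap.
  replace (k * (A / (k - 1))) with (k * A / (k - 1)) in Hgap by (field; lra).
  replace (12 * s ^ 2 / (A / (k - 1)) ^ 2)
    with (12 * (k - 1) ^ 2 * s ^ 2 / A ^ 2) in Hgap
    by (field; lra).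
  pose proof (Efun_le_uniform (A / (k - 1)) s).
  lra.
Qed.

Theorem mainTheorem3 (A s : R) (K : nat) :
  0 < A -> 0 < s -> (2 <= K)%nat -> Fbound A K s >= R_OWB A K s.
Proof.
  intros HA Hs HK.
  pose proof (F2_ge_R_OWB A s K HA Hs HK) as HF2.
  unfold Fbound.
  pose proof (Rmax_r (F1 A K s) (Rmax (F2 A K s) (F3 A K s))).
  pose proof (Rmax_l (F2 A K s) (F3 A K s)).
  lra.
Qed.
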